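(* Let $f : \mathbb{R}^{n_1} \times \mathbb{R}^{n_2} \to \mathbb{R}^{n_3}$, $(u,v) \mapsto u*v$, be a bilinear map and let $q \in \mathbb{Z}_{\geq 0}$. The following are equivalent: (1) $Q(f) \leq q$; (2) for every integer $r \geq q$ and all $u_1,\ldots,u_r \in \mathbb{R}^{n_1}$, $v_1,\ldots,v_r \in \mathbb{R}^{n_2}$, setting \[ R := \{ \alpha \in \mathbb{R}^{[r]\times[r]} \mid \textstyle\sum_{i,j} \alpha_{ij}\, u_i * v_j = 0 \} \] and $\pi : \mathbb{R}^{[r]\times[r]} \to \mathbb{R}^r$, $\alpha \mapsto (\alpha_{11},\ldots,\alpha_{rr})$, we have $\dim \pi(R) \geq r - q$.
   Context: $[r] = \{1,\ldots,r\}$. For a bilinear map $f : \mathbb{R}^{n_1} \times \mathbb{R}^{n_2} \to \mathbb{R}^{n_3}$, its subrank $Q(f)$ is the largest $r$ such that there exist linear maps $\varphi_1 : \mathbb{R}^r \to \mathbb{R}^{n_1}$, $\varphi_2 : \mathbb{R}^r \to \mathbb{R}^{n_2}$, $\varphi_3 : \mathbb{R}^{n_3} \to \mathbb{R}^r$ with $\varphi_3(f(\varphi_1(a), \varphi_2(b))) = (a_1b_1,\ldots,a_rb_r)$ for all $a,b \in \mathbb{R}^r$. *)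

From HB Require Import structures.
From mathcomp Require Import all_boot all_order all_algebra.
From mathcomp Require Import reals.
Set Implicit Arguments. Unset Strict Implicit. Unset Printing Implicit Defensive.
Import Order.TTheory GRing.Theory Num.Theory.
Local Open Scope ring_scope.

Definition bilinear_map (R : realType) (n1 n2 n3 : nat)
  (f : 'rV[R]_n1 -> 'rV[R]_n2 -> 'rV[R]_n3) : Prop :=
  (forall (a : R) (u u' : 'rV[R]_n1) (v : 'rV[R]_n2),
      f (a *: u + u') v = a *: f u v + f u' v) /\
  (forall (a : R) (u : 'rV[R]_n1) (v v' : 'rV[R]_n2),
      f u (a *: v + v') = a *: f u v + f u v').

(* There exist linear maps phi1 : R^r -> R^n1, phi2 : R^r -> R^n2,
   phi3 : R^n3 -> R^r (represented by matrices acting on row vectors) with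
   phi3 (f (phi1 a) (phi2 b)) = (a_1 b_1, ..., a_r b_r) for all a, b. *)
Definition subrank_witness (R : realType) (n1 n2 n3 : nat)
  (f : 'rV[R]_n1 -> 'rV[R]_n2 -> 'rV[R]_n3) (r : nat) : Prop :=
  exists (P1 : 'M[R]_(r, n1)) (P2 : 'M[R]_(r, n2)) (P3 : 'M[R]_(n3, r)),
    forall a b : 'rV[R]_r,
      f (a *m P1) (b *m P2) *m P3 = \row_(i < r) (a 0 i * b 0 i).

(* Q(f) <= q, where Q(f) is the largest r admitting a witness:
   every r admitting a witness satisfies r <= q. *)
Definition subrank_le (R : realType) (n1 n2 n3 : nat)
  (f : 'rV[R]_n1 -> 'rV[R]_n2 -> 'rV[R]_n3) (q : nat) : Prop :=
  forall r : nat, subrank_witness f r -> (r <= q)%N.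

Definition contract_map (R : realType) (n1 n2 n3 r : nat)
  (f : 'rV[R]_n1 -> 'rV[R]_n2 -> 'rV[R]_n3)
  (u : 'I_r -> 'rV[R]_n1) (v : 'I_r -> 'rV[R]_n2) (alpha : 'M[R]_r) : 'rV[R]_n3 :=
  \sum_(i < r) \sum_(j < r) alpha i j *: f (u i) (v j).

Definition diag_proj (R : realType) (r : nat) (alpha : 'M[R]_r) : 'rV[R]_r :=
  \row_(i < r) alpha i i.

Definition rel_space (R : realType) (n1 n2 n3 r : nat)
  (f : 'rV[R]_n1 -> 'rV[R]_n2 -> 'rV[R]_n3)
  (u : 'I_r -> 'rV[R]_n1) (v : 'I_r -> 'rV[R]_n2) : {vspace 'M[R]_r} :=
  lker (linfun (contract_map f u v)).

Definition proj_rel_space (R : realType) (n1 n2 n3 r : nat)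
  (f : 'rV[R]_n1 -> 'rV[R]_n2 -> 'rV[R]_n3)
  (u : 'I_r -> 'rV[R]_n1) (v : 'I_r -> 'rV[R]_n2) : {vspace 'rV[R]_r} :=
  (linfun (@diag_proj R r) @: rel_space f u v)%VS.

(* Write C(alpha) = sum_ij alpha_ij u_i * v_j, so that the relation space R is
   ker C; if U, V have rows u_i, v_j then f(x U, y V) = C(x^T y), and
   pi(x^T y) is the coordinatewise product of x and y.  If dim pi(R) < r - q,
   choose s >= r - dim pi(R) coordinates and a linear map H that kills pi(R)
   and is the identity on those coordinates.  Then alpha |-> pi(alpha) H
   vanishes on ker C, hence factors as C(alpha) P3, and restricting u, v to
   the chosen coordinates gives a subrank witness of size s > q.  Conversely,
   a witness of size r gives C(alpha) P3 = pi(alpha) for u_i, v_j the rows of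
   phi_1, phi_2, so pi(R) = 0 and hence r <= q. *)
From HB Require Import structures.
From mathcomp Require Import all_boot all_order all_algebra.
From mathcomp Require Import reals.
From mathcomp Require Import zify.
Import Order.TTheory GRing.Theory Num.Theory.
Local Open Scope ring_scope.

Definition hadamard {R : pzRingType} {r : nat} (x y : 'rV[R]_r) : 'rV[R]_r :=
  \row_i (x 0 i * y 0 i).

Lemma diag_proj_outer (R : realType) (r : nat) (x y : 'rV[R]_r) :
  diag_proj (x^T *m y) = hadamard x y.
Proof. by apply/rowP => i; rewrite !mxE big_ord1 !mxE. Qed.

Section Rowsub.
Variables (R : pzRingType) (r s : nat) (sg : 'I_s -> 'I_r).
Hypothesis sg_inj : injective sg.

Lemma mulmx_rowsub1E (c : 'rV[R]_s) (i : 'I_r) :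
  (c *m rowsub sg 1%:M) 0 i =
    if [pick k | sg k == i] is Some k then c 0 k else 0.
Proof.
rewrite mxE; case: pickP => [k /eqP <- | none].
  rewrite (bigD1 k) //= !mxE eqxx mulr1 big1 ?addr0 // => j jk.
  by rewrite !mxE (inj_eq sg_inj) (negbTE jk) mulr0.
by rewrite big1 // => j _; rewrite !mxE none mulr0.
Qed.

Lemma hadamard_rowsub1 (x y : 'rV[R]_s) :
  hadamard (x *m rowsub sg 1%:M) (y *m rowsub sg 1%:M)
    = hadamard x y *m rowsub sg 1%:M.
Proof.
apply/rowP => i; rewrite /hadamard mulmx_rowsub1E mxE !mulmx_rowsub1E.
by case: pickP => [k _ | _]; rewrite ?mxE ?mulr0.
Qed.

End Rowsub.

(* The chosen coordinates are a maximal free set of rows of the cokernel of a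
   basis of W, which has rank r - dim W. *)
Lemma rowsub_inverse_annihilator (R : fieldType) (r : nat)
    (W : {vspace 'rV[R]_r}) :
  exists s (sg : 'I_s -> 'I_r) (H : 'M[R]_(r, s)),
    [/\ (r - \dim W <= s)%N, injective sg,
        (forall w, w \in W -> w *m H = 0) &
        rowsub sg 1%:M *m H = 1%:M].
Proof.
pose Wm := \matrix_(i < \dim W) (vbasis W)`_i.
pose M := cokermx Wm.
have /row_freeP [B HB] := maxrowsub_free M.
exists (\rank M), (maxrankfun M), (M *m B); split.
- by rewrite mxrank_coker leq_sub2l // rank_leq_row.
- exact: maxrankfun_inj.
- move=> w /coord_vbasis ->.
  have -> : \sum_(i < \dim W) coord (vbasis W) i w *: (vbasis W)`_i
     = (\row_i coord (vbasis W) i w) *m Wm.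
    by rewrite mulmx_sum_row; apply: eq_bigr => i _; rewrite rowK mxE.
  by rewrite -mulmxA (mulmxA Wm) mulmx_coker mul0mx mulmx0.
- by rewrite mulmxA -rowsubE.
Qed.

Lemma lfun_factor_mx (K : fieldType) (aT : vectType K) (n s : nat)
    (C : 'Hom(aT, 'rV[K]_n)) (L : 'Hom(aT, 'rV[K]_s)) :
  (lker C <= lker L)%VS -> exists P : 'M[K]_(n, s), forall a, C a *m P = L a.
Proof.
move=> /subvP kerCL; exists (lin1_mx (L \o C^-1)%VF) => a.
rewrite mul_rV_lin1 /= lfunE /=; apply/eqP; rewrite -subr_eq0 -linearB /=.
have Ca_img : C a \in limg C by rewrite memv_img ?memvf.
by rewrite -memv_ker; apply: kerCL; rewrite memv_ker linearB /= limg_lfunVK ?subrr.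
Qed.

Section Contraction.
Variables (R : realType) (n1 n2 n3 r : nat)
  (f : 'rV[R]_n1 -> 'rV[R]_n2 -> 'rV[R]_n3)
  (u : 'I_r -> 'rV[R]_n1) (v : 'I_r -> 'rV[R]_n2).

Lemma contract_map_is_linear : linear (contract_map f u v).
Proof.
move=> a x y; rewrite /contract_map scaler_sumr -big_split; apply: eq_bigr => i _.
rewrite scaler_sumr -big_split; apply: eq_bigr => j _.
by rewrite !mxE scalerA scalerDl.
Qed.
HB.instance Definition _ := GRing.isLinear.Build R 'M[R]_r 'rV[R]_n3 _
  (contract_map f u v) contract_map_is_linear.

Lemma diag_proj_is_linear : linear (@diag_proj R r).
Proof. by move=> a x y; apply/rowP => i; rewrite !mxE. Qed.
HB.instance Definition _ := GRing.isLinear.Build R 'M[R]_r 'rV[R]_r _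
  (@diag_proj R r) diag_proj_is_linear.

Lemma memv_rel_space (alpha : 'M[R]_r) :
  (alpha \in rel_space f u v) = (contract_map f u v alpha == 0).
Proof. by rewrite memv_ker lfunE. Qed.

Lemma diag_proj_rel_space (alpha : 'M[R]_r) :
  alpha \in rel_space f u v -> diag_proj alpha \in proj_rel_space f u v.
Proof. by move=> Ralpha; rewrite -[diag_proj _]lfunE memv_img. Qed.

End Contraction.

Section Bilinear.
Context {R : realType} {n1 n2 n3 : nat}
  {f : 'rV[R]_n1 -> 'rV[R]_n2 -> 'rV[R]_n3}.
Hypothesis f_bilinear : bilinear_map f.

Lemma bilinear0l w : f 0 w = 0.
Proof.
by have := f_bilinear.1 (-1) 0 0 w; rewrite scaler0 addr0 scaleN1r addNr.
Qed.

Lemma bilinear0r z : f z 0 = 0.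
Proof.
by have := f_bilinear.2 (-1) z 0 0; rewrite scaler0 addr0 scaleN1r addNr.
Qed.

Lemma bilinearDl w : {morph f^~ w : a b / a + b}.
Proof. by move=> a b; have := f_bilinear.1 1 a b w; rewrite !scale1r. Qed.

Lemma bilinearDr z : {morph f z : a b / a + b}.
Proof. by move=> a b; have := f_bilinear.2 1 z a b; rewrite !scale1r. Qed.

Lemma bilinearZl a z w : f (a *: z) w = a *: f z w.
Proof. by have := f_bilinear.1 a z 0 w; rewrite !addr0 bilinear0l addr0. Qed.

Lemma bilinearZr a z w : f z (a *: w) = a *: f z w.
Proof. by have := f_bilinear.2 a z w 0; rewrite !addr0 bilinear0r addr0. Qed.

Lemma bilinear_mulmx (r : nat) (u : 'I_r -> 'rV[R]_n1) (v : 'I_r -> 'rV[R]_n2)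
    (x y : 'rV[R]_r) :
  f (x *m \matrix_i u i) (y *m \matrix_j v j) = contract_map f u v (x^T *m y).
Proof.
rewrite !mulmx_sum_row (big_morph _ (bilinearDl _) (bilinear0l _)).
apply: eq_bigr => i _; rewrite bilinearZl.
rewrite (big_morph _ (bilinearDr _) (bilinear0r _)) scaler_sumr.
apply: eq_bigr => j _; rewrite bilinearZr !rowK scalerA.
by rewrite !mxE big_ord1 !mxE.
Qed.

Lemma subrank_witness_proj_rel_space (r : nat)
    (u : 'I_r -> 'rV[R]_n1) (v : 'I_r -> 'rV[R]_n2) :
  exists2 s, (r - \dim (proj_rel_space f u v) <= s)%N & subrank_witness f s.
Proof.
have [s [sg [H [dim_s sg_inj H_pi H_sg]]]] :=
  @rowsub_inverse_annihilator _ _ (proj_rel_space f u v).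
have [|P3 P3_factor] := @lfun_factor_mx _ _ _ _ (linfun (contract_map f u v))
    (linfun (mulmxr H) \o linfun (@diag_proj R r))%VF.
  apply/subvP => alpha Ralpha; rewrite memv_ker comp_lfunE !lfunE /=.
  by apply/eqP/H_pi/diag_proj_rel_space.
have {}P3_factor alpha : contract_map f u v alpha *m P3 = diag_proj alpha *m H.
  by have := P3_factor alpha; rewrite comp_lfunE !lfunE.
exists s => //; pose S : 'M[R]_(s, r) := rowsub sg 1%:M.
exists (S *m \matrix_i u i), (S *m \matrix_j v j), P3 => a b.
rewrite !mulmxA bilinear_mulmx P3_factor.
by rewrite diag_proj_outer hadamard_rowsub1 // -mulmxA H_sg mulmx1.
Qed.

End Bilinear.

Section Witness.
Context {R : realType} {n1 n2 n3 r : nat}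
  {f : 'rV[R]_n1 -> 'rV[R]_n2 -> 'rV[R]_n3}
  {P1 : 'M[R]_(r, n1)} {P2 : 'M[R]_(r, n2)} {P3 : 'M[R]_(n3, r)}.
Hypothesis P_witness : forall a b : 'rV[R]_r,
  f (a *m P1) (b *m P2) *m P3 = \row_(i < r) (a 0 i * b 0 i).

Lemma contract_map_witness (alpha : 'M[R]_r) :
  contract_map f (fun i => row i P1) (fun j => row j P2) alpha *m P3
    = diag_proj alpha.
Proof.
apply/rowP => k; rewrite /contract_map mulmx_suml summxE mxE.
under eq_bigr => i _ do rewrite mulmx_suml summxE.
under eq_bigr => i _ do under eq_bigr => j _ do
  rewrite -scalemxAl !rowE P_witness !mxE !eqxx /=.
rewrite (bigD1 k) //= [X in _ + X]big1 ?addr0 => [|i ik]; last first.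
  by rewrite big1 // => j _; rewrite eq_sym (negbTE ik) mul0r mulr0.
rewrite (bigD1 k) //= big1 ?addr0 ?eqxx ?mulr1 // => j jk.
by rewrite eq_sym (negbTE jk) !mulr0.
Qed.

Lemma proj_rel_space_witness :
  proj_rel_space f (fun i => row i P1) (fun j => row j P2) = 0%VS.
Proof.
apply/eqP; rewrite -subv0; apply/subvP => _ /memv_imgP [alpha Ralpha ->].
rewrite memv0 lfunE /= -contract_map_witness.
by move: Ralpha; rewrite memv_rel_space => /eqP ->; rewrite mul0mx.
Qed.

End Witness.

Theorem lemma5p2 (R : realType) (n1 n2 n3 : nat)
  (f : 'rV[R]_n1 -> 'rV[R]_n2 -> 'rV[R]_n3) (q : nat) :
  bilinear_map f ->
  (subrank_le f q <->
   (forall (r : nat), (q <= r)%N ->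
    forall (u : 'I_r -> 'rV[R]_n1) (v : 'I_r -> 'rV[R]_n2),
      (r - q <= \dim (proj_rel_space f u v))%N)).
Proof.
move=> f_bilinear; split.
- move=> f_subrank r _ u v.
  have [s dim_s /f_subrank s_q] := subrank_witness_proj_rel_space f_bilinear _ u v.
  lia.
- move=> dim_proj r [P1 [P2 [P3 P_witness]]]; rewrite leqNgt; apply/negP => q_r.
  have := dim_proj r (ltnW q_r) (fun i => row i P1) (fun j => row j P2).
  rewrite (proj_rel_space_witness P_witness) dimv0; lia.
Qed.
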